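(* Let $\mathsf{NL}+\{\mathrm{S}\}$ be the system $\mathsf{NL}$ extended by the axiom scheme (S) $(\varphi\otimes\psi)\Rightarrow\varphi$. Then $\mathsf{NL}+\{\mathrm{S}\}$ is inconsistent, i.e. every formula is a theorem of it.
   Context: Formulas are built from a countably infinite set of propositional variables using the binary connectives $\otimes$ (conjunction), $\circ$ (compatibility) and the unary connective ${}^{*}$ (negation). Abbreviations: $\varphi\Rightarrow\psi:=(\varphi\circ\psi^{*})^{*}$; $\varphi\Leftrightarrow\psi:=(\varphi\Rightarrow\psi)\otimes(\psi\Rightarrow\varphi)$; $\varphi\not\Leftrightarrow\psi:=(\varphi\Leftrightarrow\psi)^{*}$; $\varphi\not\Leftrightarrow\psi\not\Leftrightarrow\chi:=((\varphi\not\Leftrightarrow\psi)\otimes(\varphi\not\Leftrightarrow\chi))\otimes(\psi\not\Leftrightarrow\chi)$. Axiom schemes: (A1) $\varphi\Rightarrow\varphi$; (A2) $(\varphi\circ\psi)\Rightarrow(\psi\circ\varphi)$; (A3) $\varphi\Rightarrow\varphi^{**}$; (A4) $(\varphi\Rightarrow\psi)\Rightarrow(\varphi\circ\psi)$; (A5) $(\varphi\otimes\psi)\Leftrightarrow(\psi\otimes\varphi)$; (A6) $((\varphi\otimes\psi)\Rightarrow\chi)\Rightarrow((\varphi\otimes\chi^{*})\Rightarrow\psi^{*})$; (A7) $(\varphi\not\Leftrightarrow\psi\not\Leftrightarrow\chi)\Rightarrow((\varphi\Rightarrow\psi)\Rightarrow((\psi\Rightarrow\chi)\Rightarrow(\varphi\Rightarrow\chi)))$.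 The theorems of $\mathsf{NL}$ form the least set of formulas containing all instances of (A1)–(A7) and closed under the following rules, which apply only to theorems: (MP) from theorems $\varphi\Rightarrow\psi$ and $\varphi$ infer $\psi$; (Adj) from theorems $\varphi,\psi$ infer $\varphi\otimes\psi$; $(\mathrm{Eq})_1$ from theorems $\varphi\Leftrightarrow\psi$ and $\chi$ infer $\chi'$, where $\chi'$ is obtained from $\chi$ by replacing one or more occurrences of $\varphi$ by $\psi$; (CE) from a theorem $\varphi\otimes\psi$ infer $\varphi$. Extending $\mathsf{NL}$ by an axiom scheme means adding all its instances to the initial set. *)

From Stdlib Require Import Arith.

Inductive form : Type :=
  | Var  : nat -> form
  | Conj : form -> form -> form
  | Comp : form -> form -> form
  | Neg  : form -> form.

Definition Imp (a b : form) : form := Neg (Comp a (Neg b)).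
Definition Iff (a b : form) : form := Conj (Imp a b) (Imp b a).
Definition NIff (a b : form) : form := Neg (Iff a b).
Definition NIff3 (a b c : form) : form :=
  Conj (Conj (NIff a b) (NIff a c)) (NIff b c).

Inductive nl_axiom : form -> Prop :=
  | A1 : forall a, nl_axiom (Imp a a)
  | A2 : forall a b, nl_axiom (Imp (Comp a b) (Comp b a))
  | A3 : forall a, nl_axiom (Imp a (Neg (Neg a)))
  | A4 : forall a b, nl_axiom (Imp (Imp a b) (Comp a b))
  | A5 : forall a b, nl_axiom (Iff (Conj a b) (Conj b a))
  | A6 : forall a b c,
      nl_axiom (Imp (Imp (Conj a b) c) (Imp (Conj a (Neg c)) (Neg b)))
  | A7 : forall a b c,
      nl_axiom (Imp (NIff3 a b c)
                    (Imp (Imp a b) (Imp (Imp b c) (Imp a c)))).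

Inductive s_axiom : form -> Prop :=
  | S_ax : forall a b, s_axiom (Imp (Conj a b) a).

(* repl a b c c' : c' is obtained from c by replacing zero or more
   occurrences of a by b.  *)
Inductive repl (a b : form) : form -> form -> Prop :=
  | repl_here : repl a b a b
  | repl_refl : forall c, repl a b c c
  | repl_conj : forall c1 c2 d1 d2,
      repl a b c1 d1 -> repl a b c2 d2 -> repl a b (Conj c1 c2) (Conj d1 d2)
  | repl_comp : forall c1 c2 d1 d2,
      repl a b c1 d1 -> repl a b c2 d2 -> repl a b (Comp c1 c2) (Comp d1 d2)
  | repl_neg : forall c d, repl a b c d -> repl a b (Neg c) (Neg d).

(* repl1 a b c c' : replacing ONE OR MORE occurrences of a by b. *)
Inductive repl1 (a b : form) : form -> form -> Prop :=
  | repl1_here : repl1 a b a b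
  | repl1_conjl : forall c1 c2 d1 d2,
      repl1 a b c1 d1 -> repl a b c2 d2 -> repl1 a b (Conj c1 c2) (Conj d1 d2)
  | repl1_conjr : forall c1 c2 d1 d2,
      repl a b c1 d1 -> repl1 a b c2 d2 -> repl1 a b (Conj c1 c2) (Conj d1 d2)
  | repl1_compl : forall c1 c2 d1 d2,
      repl1 a b c1 d1 -> repl a b c2 d2 -> repl1 a b (Comp c1 c2) (Comp d1 d2)
  | repl1_compr : forall c1 c2 d1 d2,
      repl a b c1 d1 -> repl1 a b c2 d2 -> repl1 a b (Comp c1 c2) (Comp d1 d2)
  | repl1_neg : forall c d, repl1 a b c d -> repl1 a b (Neg c) (Neg d).

Inductive thm (ext : form -> Prop) : form -> Prop :=
  | th_ax  : forall a, nl_axiom a -> thm ext a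
  | th_ext : forall a, ext a -> thm ext a
  | th_mp  : forall a b, thm ext (Imp a b) -> thm ext a -> thm ext b
  | th_adj : forall a b, thm ext a -> thm ext b -> thm ext (Conj a b)
  | th_eq  : forall a b c c', thm ext (Iff a b) -> thm ext c ->
                repl1 a b c c' -> thm ext c'
  | th_ce  : forall a b, thm ext (Conj a b) -> thm ext a.

Definition NL_S : form -> Prop := thm s_axiom.


(* (A6) with χ := φ turns the (S)-instance (φ ⊗ ψ) ⇒ φ into (φ ⊗ ¬φ) ⇒ ¬ψ,
   writing ¬ for the negation ^*: a contradiction implies every negation.
   For ψ := ¬φ this is the negation of X := (φ ⊗ ¬φ) ∘ ¬¬φ, while (A4)
   weakens it to X itself.  Hence X ⊗ ¬X is a theorem, so every negation is,
   and since φ ⇒ ψ is itself a negation, every ψ follows by (MP) from the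
   instance p ⇒ p of (A1). *)

Lemma thm_of_neg_all (ext : form -> Prop) :
  (forall d, thm ext (Neg d)) -> forall phi, thm ext phi.
Proof.
  intros neg_all phi.
  apply (th_mp _ (Imp (Var 0) (Var 0))).
  - apply neg_all.
  - apply th_ax, A1.
Qed.

Section ContainingS.

Variable ext : form -> Prop.
Hypothesis ext_S : forall a b, ext (Imp (Conj a b) a).

Lemma thm_contradiction_imp_neg (a b : form) :
  thm ext (Imp (Conj a (Neg a)) (Neg b)).
Proof.
  apply (th_mp _ _ _ (th_ax _ _ (A6 a b a))).
  apply th_ext, ext_S.
Qed.

Lemma thm_contradiction_comp_neg (a b : form) :
  thm ext (Comp (Conj a (Neg a)) (Neg b)).
Proof.
  apply (th_mp _ _ _ (th_ax _ _ (A4 _ _))).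
  apply thm_contradiction_imp_neg.
Qed.

Lemma thm_neg_all (d : form) : thm ext (Neg d).
Proof.
  set (p := Var 0).
  set (x := Comp (Conj p (Neg p)) (Neg (Neg p))).
  assert (thm_x : thm ext x) by apply thm_contradiction_comp_neg.
  assert (thm_neg_x : thm ext (Neg x)) by apply (thm_contradiction_imp_neg p p).
  apply (th_mp _ _ _ (thm_contradiction_imp_neg x d)).
  apply th_adj; assumption.
Qed.

End ContainingS.

Theorem proposition3p2 : forall phi : form, NL_S phi.
Proof.
  apply thm_of_neg_all, thm_neg_all.
  intros a b. apply S_ax.
Qed.
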